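(* Let $k,n\in\mathbb{N}$, let $p_0,\dots,p_k$ be positive reals summing to $1$, and let $\boldsymbol{X}=[X_0,\dots,X_k]^\top$ have the multinomial distribution $\Pr\{\boldsymbol{X}=\boldsymbol{x}\}=\frac{n!}{\prod_{i=0}^kx_i!}\prod_{i=0}^kp_i^{x_i}$ for nonnegative integers $x_i$ with $\sum_ix_i=n$. Let $\mu_i=np_i$, $\boldsymbol{\mu}=[\mu_0,\dots,\mu_k]^\top$, and let $z_0,\dots,z_k$ be nonnegative integers with $\sum_{i=0}^kz_i=n$, $\boldsymbol{z}=[z_0,\dots,z_k]^\top$. Then $$\Pr\{\boldsymbol{X}\boldsymbol{\prec}\boldsymbol{z}\}\le\prod_{i=0}^k\Big(\frac{\mu_i}{z_i}\Big)^{z_i}\ \text{ if }\boldsymbol{z}\boldsymbol{\prec}\boldsymbol{\mu},\qquad \Pr\{\boldsymbol{X}\boldsymbol{\succ}\boldsymbol{z}\}\le\prod_{i=0}^k\Big(\frac{\mu_i}{z_i}\Big)^{z_i}\ \text{ if }\boldsymbol{z}\boldsymbol{\succ}\boldsymbol{\mu}.$$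
   Context: For vectors $\boldsymbol{x}=[x_0,\dots,x_k]^\top,\boldsymbol{y}=[y_0,\dots,y_k]^\top$, $\boldsymbol{x}\boldsymbol{\prec}\boldsymbol{y}$ means $x_i\le y_i$ for $i=1,\dots,k$ (index $0$ is not compared), and $\boldsymbol{x}\boldsymbol{\succ}\boldsymbol{y}$ means $x_i\ge y_i$ for $i=1,\dots,k$. The convention $0^0=1$ is used. *)

From mathcomp Require Import all_boot all_order all_algebra.
Set Implicit Arguments. Unset Strict Implicit. Unset Printing Implicit Defensive.
Import Order.TTheory GRing.Theory Num.Theory.
Local Open Scope ring_scope.

Definition multinomial_pmf (R : realFieldType) (k n : nat) (p : 'I_k.+1 -> R)
    (x : 'I_k.+1 -> nat) : R :=
  if (\sum_(i < k.+1) x i)%N == n then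
    (n`!)%:R / (\prod_(i < k.+1) ((x i)`!)%:R) * \prod_(i < k.+1) p i ^+ x i
  else 0.

(* Probability of an event A on outcomes; every outcome in the support has
   coordinates in {0,...,n}, so summing over {ffun 'I_k.+1 -> 'I_n.+1}
   enumerates the whole support. *)
Definition multinomial_prob (R : realFieldType) (k n : nat) (p : 'I_k.+1 -> R)
    (A : ('I_k.+1 -> nat) -> bool) : R :=
  \sum_(x : {ffun 'I_k.+1 -> 'I_n.+1} | A (fun i => nat_of_ord (x i)))
     multinomial_pmf n p (fun i => nat_of_ord (x i)).

Definition vprec (R : realFieldType) (k : nat) (x y : 'I_k.+1 -> R) : Prop :=
  forall i : 'I_k.+1, (0 < i)%N -> x i <= y i.
Definition vsucc (R : realFieldType) (k : nat) (x y : 'I_k.+1 -> R) : Prop :=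
  forall i : 'I_k.+1, (0 < i)%N -> y i <= x i.

Definition natvec (R : realFieldType) (k : nat) (x : 'I_k.+1 -> nat) : 'I_k.+1 -> R :=
  fun i => (x i)%:R.

Definition vprecn (k : nat) (x y : 'I_k.+1 -> nat) : bool :=
  [forall i : 'I_k.+1, (0 < i)%N ==> (x i <= y i)%N].
Definition vsuccn (k : nat) (x y : 'I_k.+1 -> nat) : bool :=
  [forall i : 'I_k.+1, (0 < i)%N ==> (y i <= x i)%N].

From mathcomp Require Import all_boot all_order all_algebra.
From mathcomp Require Import zify ring lra.
Import Order.TTheory GRing.Theory Num.Theory.
Set Implicit Arguments. Unset Strict Implicit.
Local Open Scope ring_scope.

(* Chernoff's method with exponential weights c_i = z_i / mu_i: on the event,
   prod c_i^z_i <= prod c_i^X_i coordinatewise, and by the multinomial theorem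
   E[prod c_i^X_i] = (sum p_i c_i)^n = (sum z_i / n)^n = 1.  The coordinate
   0, which the event does not constrain, is controlled because sum X = sum z
   = sum mu = n forces z_0 to lie between X_0 and mu_0 as well. *)

Definition ffun_cons (T : finType) K (a : T) (f : {ffun 'I_K -> T}) :
    {ffun 'I_K.+1 -> T} :=
  [ffun i => if unlift ord0 i is Some j then f j else a].

Lemma ffun_cons_bij (T : finType) K :
  bijective (fun af : T * {ffun 'I_K -> T} => ffun_cons af.1 af.2).
Proof.
exists (fun x : {ffun 'I_K.+1 -> T} => (x ord0, [ffun j => x (lift ord0 j)])).
- case=> a f /=; rewrite /ffun_cons ffunE unlift_none; congr pair.
  by apply/ffunP=> j; rewrite !ffunE liftK.
- move=> x; apply/ffunP=> i; rewrite !ffunE.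
  by case: unliftP => [j ->|->] //; rewrite ffunE.
Qed.

Section MultinomialTheorem.
Variable R : numFieldType.

(* [multinomial_pmf] for any number [K] of categories, including [K = 0],
   where the induction on [K] below starts. *)
Definition multinomial_weight K N (q : 'I_K -> R) (x : 'I_K -> nat) : R :=
  if (\sum_(i < K) x i)%N == N then
    (N`!)%:R / (\prod_(i < K) ((x i)`!)%:R) * \prod_(i < K) q i ^+ x i
  else 0.

Lemma eq_multinomial_weight K N (q : 'I_K -> R) x y :
  x =1 y -> multinomial_weight N q x = multinomial_weight N q y.
Proof.
move=> exy; rewrite /multinomial_weight (eq_bigr _ (fun i _ => exy i)).
under [X in _ / X]eq_bigr do rewrite exy.
by under [X in _ * X]eq_bigr do rewrite exy.
Qed.

Lemma multinomial_weight_cons K N (q : 'I_K.+1 -> R) a (x : 'I_K -> nat) :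
  multinomial_weight N q (fun i => if unlift ord0 i is Some j then x j else a) =
  if (a <= N)%N then
    'C(N, a)%:R * q ord0 ^+ a *
      multinomial_weight (N - a)%N (fun j => q (lift ord0 j)) x
  else 0.
Proof.
rewrite /multinomial_weight !big_ord_recl /= unlift_none.
under eq_bigr do rewrite liftK.
under [X in _ / (_ * X)]eq_bigr do rewrite liftK.
under [X in _ * (_ * X)]eq_bigr do rewrite liftK.
case: leqP => [leaN|ltNa]; last first.
  by case: eqP => // sumE; move: ltNa; rewrite -sumE; lia.
have -> : ((a + \sum_(i < K) x i)%N == N) = ((\sum_(i < K) x i)%N == N - a)%N.
  by apply/eqP/eqP; lia.
case: eqP => _; last by rewrite mulr0.
have fact_neq0 (m : nat) : (m`!)%:R != 0 :> R.
  by rewrite pnatr_eq0 -lt0n fact_gt0.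
have prod_neq0 : \prod_(i < K) ((x i)`!)%:R != 0 :> R.
  by rewrite prodf_seq_neq0; apply/allP => i _; apply: fact_neq0.
rewrite -(bin_fact leaN) !natrM; field.
by rewrite fact_neq0 prod_neq0.
Qed.

Theorem multinomial_theorem K m N (q : 'I_K -> R) : (N <= m)%N ->
  \sum_(x : {ffun 'I_K -> 'I_m.+1}) multinomial_weight N q (fun i => x i)
  = (\sum_(i < K) q i) ^+ N.
Proof.
elim: K N q => [|K IH] N q leNm.
  rewrite big_ord0 expr0n /multinomial_weight.
  under eq_bigr do rewrite !big_ord0.
  rewrite sumr_const card_ffun !card_ord expn0 mulr1n.
  by case: N {leNm} => [|N] //=; rewrite divr1 mulr1.
rewrite (reindex _ (onW_bij _ (ffun_cons_bij _ K))) /=.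
rewrite -(pair_big predT predT (fun a f =>
  multinomial_weight N q (fun i => nat_of_ord (ffun_cons a f i)))) /=.
rewrite [in RHS]big_ord_recl [in RHS]addrC exprDn.
rewrite (big_ord_widen _ (fun i : nat =>
  (\sum_(j < K) q (lift ord0 j)) ^+ (N - i) * q ord0 ^+ i *+ 'C(N, i))
  (_ : N.+1 <= m.+1)%N) // big_mkcond [RHS]big_mkcond /=.
apply: eq_bigr => a _.
under eq_bigr => f _.
  rewrite (@eq_multinomial_weight _ _ _ _
    (fun i => if unlift ord0 i is Some j then val (f j) else val a));
    last by move=> i; rewrite ffunE; case: unlift.
  rewrite multinomial_weight_cons.
  over.
rewrite ltnS; case: (leqP a N) => [leaN|_]; last by rewrite big1_eq.
by rewrite -mulr_sumr IH; [rewrite -mulr_natr; ring | lia].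
Qed.

Lemma multinomial_weight_ge0 K N (q : 'I_K -> R) x :
  (forall i, 0 <= q i) -> 0 <= multinomial_weight N q x.
Proof.
move=> q_ge0; rewrite /multinomial_weight; case: eqP => // _.
rewrite mulr_ge0 ?divr_ge0 ?prodr_ge0 // => i _; exact: exprn_ge0.
Qed.

Lemma multinomial_weightZ K N (q c : 'I_K -> R) x :
  multinomial_weight N q x * \prod_(i < K) c i ^+ x i =
  multinomial_weight N (fun i => q i * c i) x.
Proof.
rewrite /multinomial_weight; case: eqP => _; last by rewrite mul0r.
by rewrite (eq_bigr _ (fun i _ => exprMn (x i) (q i) (c i))) big_split mulrA.
Qed.

End MultinomialTheorem.

Section ChernoffBound.
Variables (R : realFieldType) (k n : nat) (p : 'I_k.+1 -> R).
Hypothesis p_ge0 : forall i, 0 <= p i.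

Lemma multinomial_prob_chernoff (c : 'I_k.+1 -> R) (z : 'I_k.+1 -> nat)
    (A : ('I_k.+1 -> nat) -> bool) :
  (forall i, 0 <= c i) ->
  (forall x, (\sum_(i < k.+1) x i)%N = n -> A x ->
     forall i, c i ^+ z i <= c i ^+ x i) ->
  multinomial_prob n p A * \prod_(i < k.+1) c i ^+ z i
    <= (\sum_(i < k.+1) p i * c i) ^+ n.
Proof.
move=> c_ge0 cA.
have pc_ge0 i : 0 <= p i * c i by rewrite mulr_ge0.
rewrite -(multinomial_theorem _ (leqnn n)) /multinomial_prob mulr_suml.
rewrite [X in _ <= X](bigID (fun x : {ffun _ -> 'I_n.+1} => A (fun i => x i))).
rewrite -[X in X <= _]addr0 lerD ?sumr_ge0 // => [|x _]; last first.
  exact: multinomial_weight_ge0.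
apply: ler_sum => x Ax; rewrite -multinomial_weightZ.
rewrite /multinomial_pmf /multinomial_weight; case: eqP => [sumx|_]; last first.
  by rewrite !mul0r.
apply: ler_wpM2l.
  by rewrite mulr_ge0 ?divr_ge0 ?prodr_ge0 // => i _; rewrite exprn_ge0.
by apply: ler_prod => i _; rewrite exprn_ge0 //= (cA _ sumx Ax).
Qed.

End ChernoffBound.

Section CoordinateOrder.
Variables (R : realFieldType) (k : nat).

Lemma vprecn_natvec (x y : 'I_k.+1 -> nat) :
  vprecn x y -> vprec (natvec R x) (natvec R y).
Proof. by move=> /forallP xy i i_gt0; rewrite ler_nat (implyP (xy i)). Qed.

Lemma vprec_sum_ord0 (a b : 'I_k.+1 -> R) :
  vprec a b -> \sum_(i < k.+1) a i = \sum_(i < k.+1) b i -> b ord0 <= a ord0.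
Proof.
move=> ab; rewrite !big_ord_recl => sumE.
have : \sum_(i < k) a (lift ord0 i) <= \sum_(i < k) b (lift ord0 i).
  by apply: ler_sum => i _; apply: ab.
lra.
Qed.

Lemma vprec_between (a b c : 'I_k.+1 -> R) :
  vprec a b -> vprec b c ->
  \sum_(i < k.+1) a i = \sum_(i < k.+1) b i ->
  \sum_(i < k.+1) b i = \sum_(i < k.+1) c i ->
  forall i, (a i <= b i <= c i) || (c i <= b i <= a i).
Proof.
move=> ab bc sum_ab sum_bc i; case: (posnP i) => [i0|i_gt0].
  have -> : i = ord0 by apply: val_inj.
  by rewrite (vprec_sum_ord0 ab sum_ab) (vprec_sum_ord0 bc sum_bc) orbT.
by rewrite ab ?bc.
Qed.

Lemma ratio_expr_between (x z : nat) (m : R) : 0 < m ->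
  ((x%:R : R) <= z%:R <= m) || (m <= z%:R <= (x%:R : R)) ->
  (z%:R / m) ^+ z <= (z%:R / m) ^+ x.
Proof.
move=> m_gt0 /orP[/andP[xz zm] | /andP[mz zx]].
- apply: ler_wiXn2l; last by rewrite ler_nat in xz.
  - by rewrite divr_ge0 // ltW.
  - by rewrite ler_pdivrMr ?mul1r.
- apply: ler_weXn2l; last by rewrite ler_nat in zx.
  by rewrite ler_pdivlMr ?mul1r.
Qed.

End CoordinateOrder.

Lemma leq_sum_term (I : finType) (F : I -> nat) i : (F i <= \sum_j F j)%N.
Proof. by rewrite (bigD1 i) //= leq_addr. Qed.

Section TailBound.
Variables (R : realFieldType) (k n : nat).
Variables (p : 'I_k.+1 -> R) (z : 'I_k.+1 -> nat).
Hypothesis p_gt0 : forall i, 0 < p i.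
Hypothesis sum_z : (\sum_(i < k.+1) z i)%N = n.

Let mu i := n%:R * p i.

Lemma multinomial_prob_le_between (A : ('I_k.+1 -> nat) -> bool) :
  (forall x, (\sum_(i < k.+1) x i)%N = n -> A x -> forall i,
     (natvec R x i <= natvec R z i <= mu i) ||
     (mu i <= natvec R z i <= natvec R x i)) ->
  multinomial_prob n p A <= \prod_(i < k.+1) (mu i / (z i)%:R) ^+ z i.
Proof.
move=> zA; set bound := \prod_(i < k.+1) _.
pose c i := (z i)%:R / mu i.
have mu_gt0 i : (0 < n)%N -> 0 < mu i by move=> n_gt0; rewrite mulr_gt0 ?ltr0n.
have mu_ge0 i : 0 <= mu i by rewrite mulr_ge0 // ltW.
have bound_ge0 : 0 <= bound.
  by apply: prodr_ge0 => i _; rewrite exprn_ge0 // divr_ge0.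
have prod_c_bound : \prod_(i < k.+1) c i ^+ z i * bound = 1.
  rewrite -big_split big1 // => i _ /=; rewrite -exprMn.
  have [->|z_gt0] := posnP (z i); first by rewrite expr0.
  have n_gt0 : (0 < n)%N by rewrite -sum_z (leq_trans z_gt0) ?leq_sum_term.
  have z_neq0 : (z i)%:R != 0 :> R by rewrite pnatr_eq0 -lt0n.
  by rewrite mulrA divfK ?divff ?expr1n // gt_eqF ?mu_gt0.
have sum_pc : (\sum_(i < k.+1) p i * c i) ^+ n = 1.
  have [->|n_gt0] := posnP n; first by rewrite expr0.
  rewrite (eq_bigr (fun i => (z i)%:R / n%:R)) => [|i _]; last first.
    by rewrite /c /mu; field; rewrite pnatr_eq0 -lt0n n_gt0 gt_eqF.
  by rewrite -mulr_suml -natr_sum sum_z divff ?expr1n // pnatr_eq0 -lt0n.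
rewrite -[X in X <= _]mulr1 -prod_c_bound mulrA -[X in _ <= X]mul1r.
apply: (ler_wpM2r bound_ge0); rewrite -[X in _ <= X]sum_pc.
apply: multinomial_prob_chernoff => [i|i|x sum_x Ax i].
- exact: ltW.
- by rewrite divr_ge0.
have [n0|n_gt0] := posnP n.
  have x0 : x i = 0%N by apply/eqP; rewrite -leqn0 -n0 -sum_x leq_sum_term.
  have z0 : z i = 0%N by apply/eqP; rewrite -leqn0 -n0 -sum_z leq_sum_term.
  by rewrite x0 z0.
exact: ratio_expr_between (mu_gt0 i n_gt0) (zA x sum_x Ax i).
Qed.

End TailBound.

Theorem corollary1 (R : realFieldType) (k n : nat) (p : 'I_k.+1 -> R)
    (hp : forall i, 0 < p i) (hsum : \sum_(i < k.+1) p i = 1)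
    (z : 'I_k.+1 -> nat) (hz : (\sum_(i < k.+1) z i)%N = n) :
  let mu : 'I_k.+1 -> R := fun i => n%:R * p i in
  let bound : R := \prod_(i < k.+1) (mu i / (z i)%:R) ^+ z i in
  (vprec (natvec R z) mu ->
     multinomial_prob n p (fun x => vprecn x z) <= bound) /\
  (vsucc (natvec R z) mu ->
     multinomial_prob n p (fun x => vsuccn x z) <= bound).
Proof.
move=> mu bound.
have sum_natvec x : (\sum_(i < k.+1) x i)%N = n ->
    \sum_(i < k.+1) natvec R x i = n%:R.
  by move=> sum_x; rewrite /natvec -natr_sum sum_x.
have sum_mu : \sum_(i < k.+1) mu i = n%:R by rewrite -mulr_sumr hsum mulr1.
(* [vsucc a b] and [vsuccn a b] unfold to [vprec b a] and [vprecn b a]. *)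
split=> [z_mu | mu_z]; apply: multinomial_prob_le_between => // x sum_x.
- move=> /(@vprecn_natvec R) x_z i.
  by apply: vprec_between x_z z_mu _ _ i; rewrite !sum_natvec.
- move=> /(@vprecn_natvec R) z_x i; rewrite orbC.
  by apply: vprec_between mu_z z_x _ _ i; rewrite ?sum_natvec.
Qed.
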